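(* Let $3\le n\le m$ and let $G=P_n\square P_m$ be the grid graph. Then every minimal resolving set of $G$ has cardinality at most $2n-2$, and there exists a minimal resolving set of $G$ of cardinality exactly $2n-2$; that is, the largest cardinality of a minimal resolving set of $G$ is $2n-2$.
   Context: The grid graph $P_n\square P_m$ has vertex set $\{(i,j):0\le i\le n-1,\ 0\le j\le m-1\}$, with $(i,j)$ adjacent to $(k,l)$ iff $|i-k|+|j-l|=1$; the distance is $d((i,j),(k,l))=|i-k|+|j-l|$. A vertex $w$ resolves two vertices $u,v$ if $d(w,u)\ne d(w,v)$. A set $R$ of vertices is resolving if every pair of distinct vertices is resolved by some vertex of $R$. A minimal resolving set is a resolving set $R$ such that no $R\setminus\{v\}$, $v\in R$, is resolving. *)

From mathcomp Require Import all_boot all_order.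
Set Implicit Arguments. Unset Strict Implicit. Unset Printing Implicit Defensive.

Definition gvert (n m : nat) := ('I_n * 'I_m)%type.

Definition absdiff (a b : nat) : nat := (a - b) + (b - a).

(* Graph distance in the grid: d((i,j),(k,l)) = |i-k| + |j-l|. *)
Definition gdist (n m : nat) (u v : gvert n m) : nat :=
  absdiff u.1 v.1 + absdiff u.2 v.2.

Definition resolves (n m : nat) (w u v : gvert n m) : bool :=
  gdist w u != gdist w v.

Definition resolving (n m : nat) (R : {set gvert n m}) : Prop :=
  forall u v : gvert n m, u != v -> exists2 w, w \in R & resolves w u v.

Definition minimal_resolving (n m : nat) (R : {set gvert n m}) : Prop :=
  resolving R /\ forall v, v \in R -> ~ resolving (R :\ v).

From mathcomp Require Import all_boot all_order zify.
From Stdlib Require Import Classical.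
Set Implicit Arguments. Unset Strict Implicit. Unset Printing Implicit Defensive.

(* Two vertices are left unresolved exactly by the vertices of their bisector, and every
   bisector is contained in the bisector of a pair at distance two: the pair
   (0, c-1), (0, c+1), whose bisector is column c, the transposed pair with bisector
   row c, or a diagonal pair of the unit square with corner (i, j), whose bisector is a
   pair of opposite quadrants at that corner.  Hence R is resolving iff it meets the
   complement of each of these bisectors, and minimal iff moreover each vertex of R is
   the only one of R off one of them.
   If a vertex is isolated in this way by a column, the rest of R lies on that column,
   and when |R| > 3 the middle one of three of those vertices cannot be isolated.  So
   every vertex of a larger minimal resolving set is isolated by a diagonal pair, and for
   each of the n - 1 possible row cuts i at most two vertices are, whence |R| <= 2n - 2.
   Equality holds for the staircase (r, r), (r, r+1), r < n - 1, with (n-2, n-1) moved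
   to (n-2, m-1). *)

(* [Col c], [Row c] and [Diag i j t] stand for the pairs at distance two described
   above; [Diag i j true] is [(i, j), (i+1, j+1)] and [Diag i j false] is
   [(i, j+1), (i+1, j)].  [passes x a b] says that [(a, b)] resolves the pair. *)
Inductive grid_test := Col of nat | Row of nat | Diag of nat & nat & bool.

Definition cut_pass (t : bool) (j : nat) (s : bool) (b : nat) : bool :=
  (s == (b <= j)) == t.

Definition passes (x : grid_test) (a b : nat) : bool :=
  match x with
  | Col c => b != c
  | Row c => a != c
  | Diag i j t => cut_pass t j (a <= i) b
  end.

Definition valid_test (n m : nat) (x : grid_test) : bool :=
  match x with
  | Col c => 0 < c < m.-1
  | Row c => 0 < c < n.-1
  | Diag i j _ => (i < n.-1) && (j < m.-1)
  end.

Lemma passes_between x a1 b1 a b a2 b2 :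
  a1 <= a <= a2 -> b1 <= b <= b2 -> a1 = a2 \/ b1 = b2 ->
  passes x a b -> passes x a1 b1 || passes x a2 b2.
Proof. by case: x => [c|c|i j t] /=; rewrite ?/cut_pass; lia. Qed.

(* For a fixed row cut, [s] tells on which side of the cut a vertex lies; a diagonal
   test then compares its column [b] with the threshold [j], in a direction fixed by
   [s] and [t]. *)
Lemma no_three_cut_isolated (t1 t2 t3 s1 s2 s3 s4 : bool) (j1 j2 j3 b1 b2 b3 b4 : nat) :
  cut_pass t1 j1 s1 b1 -> ~~ cut_pass t1 j1 s2 b2 -> ~~ cut_pass t1 j1 s3 b3 ->
  ~~ cut_pass t1 j1 s4 b4 ->
  cut_pass t2 j2 s2 b2 -> ~~ cut_pass t2 j2 s1 b1 -> ~~ cut_pass t2 j2 s3 b3 ->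
  ~~ cut_pass t2 j2 s4 b4 ->
  cut_pass t3 j3 s3 b3 -> ~~ cut_pass t3 j3 s1 b1 -> ~~ cut_pass t3 j3 s2 b2 ->
  ~~ cut_pass t3 j3 s4 b4 ->
  False.
Proof.
by case: t1; case: t2; case: t3; case: s1; case: s2; case: s3; case: s4;
  rewrite /cut_pass /=; lia.
Qed.

Lemma card_bigcup_le (T : finType) (D : nat -> {set T}) b k :
  (forall i, i < k -> #|D i| <= b) -> #|\bigcup_(i < k) D i| <= k * b.
Proof.
elim: k => [|k IHk] hD; first by rewrite big_ord0 cards0.
rewrite big_ord_recr /= mulSn addnC; apply: leq_trans (leq_card_setU _ _) _.
by rewrite leq_add ?hD ?IHk // => i /ltnW /hD.
Qed.

Lemma card_setD1_gt (T : finType) (A : {set T}) x k : k.+1 < #|A| -> k < #|A :\ x|.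
Proof. by rewrite (cardsD1 x A); case: (x \in A) => /=; lia. Qed.

Section GridTests.

Variables n m : nat.
Hypotheses (n_gt1 : 1 < n) (m_gt1 : 1 < m).
Implicit Types (R S : {set gvert n m}) (x : grid_test) (p q u v w : gvert n m).

Lemma test_pair x : valid_test n m x ->
  exists u v, u != v /\ forall w, resolves w u v = passes x w.1 w.2.
Proof.
have vtx a b : a < n -> b < m -> exists p : gvert n m, p.1 = a :> nat /\ p.2 = b :> nat.
  by move=> ha hb; exists (Ordinal ha, Ordinal hb).
have pair a b a' b' : a < n -> b < m -> a' < n -> b' < m -> (a != a') || (b != b') ->
    (forall c d,
       (absdiff c a + absdiff d b != absdiff c a' + absdiff d b') = passes x c d) ->
    exists u v, u != v /\ forall w, resolves w u v = passes x w.1 w.2.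
  move=> ha hb ha' hb' ne E.
  have [u [eu1 eu2]] := vtx _ _ ha hb; have [v [ev1 ev2]] := vtx _ _ ha' hb'.
  exists u, v; split; last by move=> w; rewrite /resolves /gdist eu1 eu2 ev1 ev2 E.
  by apply: contraTneq ne => uv; rewrite -eu1 -eu2 -ev1 -ev2 uv !eqxx.
case: x pair => [c|c|i j [|]] pair /= hx;
  [ apply: (pair 0 c.-1 0 c.+1) | apply: (pair c.-1 0 c.+1 0)
  | apply: (pair i j i.+1 j.+1) | apply: (pair i j.+1 i.+1 j) ]; try lia.
all: by move=> a b /=; rewrite /absdiff ?/cut_pass; apply/idP/idP => ?; lia.
Qed.

Lemma dominating_test_nat i j k l :
  i < n -> j < m -> k < n -> l < m -> (i != k) || (j != l) ->
  exists2 x, valid_test n m x &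
    forall a b, passes x a b -> absdiff a i + absdiff b j != absdiff a k + absdiff b l.
Proof.
wlog le_ik : i j k l / i <= k => [hw hi hj hk hl ne|hi hj hk hl ne].
  case: (leqP i k) => [le_ik|/ltnW lt_ki]; first exact: hw.
  have [|x vx hx] := hw k l i j lt_ki hk hl hi hj; first by rewrite eq_sym (eq_sym l).
  by exists x => // a b /hx; rewrite eq_sym.
have [s [r [ds r_lt2]]] : exists s r, k - i + absdiff j l = s * 2 + r /\ r < 2.
  exists ((k - i + absdiff j l) %/ 2), ((k - i + absdiff j l) %% 2).
  by rewrite -divn_eq ltn_pmod.
move: ds; rewrite /absdiff => ds.
have [r1|r0] : r = 1 \/ r = 0 by lia.
  by exists (Diag 0 0 true); rewrite /= ?/cut_pass; lia.
have [ik|lt_ik] : i = k \/ i < k by lia.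
  by exists (Col (minn j l + s)) => /=; lia.
have [jl|ne_jl] : j = l \/ j != l by lia.
  by exists (Row (i + s)) => /=; lia.
(* [(i + s - e, j +- e)] is the vertex halfway between the two points on the monotone
   path that leaves [(i, j)] along its row; the bisector avoids the diagonal test
   cornered there. *)
have [lt_jl|lt_lj] : j < l \/ l < j by lia.
  pose e := minn s (l - j).
  by exists (Diag (i + (s - e)) (j + e).-1 true); rewrite /= ?/cut_pass /e; lia.
pose e := minn s (j - l).
by exists (Diag (i + (s - e)) (j - e) false); rewrite /= ?/cut_pass /e; lia.
Qed.

Lemma dominating_test u v : u != v ->
  exists2 x, valid_test n m x & forall w, passes x w.1 w.2 -> resolves w u v.
Proof.
move=> uv; have ne : (u.1 != v.1 :> nat) || (u.2 != v.2 :> nat).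
  by case: u v uv => [a b] [c d]; rewrite xpair_eqE negb_and.
have [x vx hx] :=
  dominating_test_nat (ltn_ord u.1) (ltn_ord u.2) (ltn_ord v.1) (ltn_ord v.2) ne.
by exists x => // w /hx.
Qed.

Lemma resolvingP R :
  resolving R <-> forall x, valid_test n m x -> exists2 w, w \in R & passes x w.1 w.2.
Proof.
split=> [resR x /test_pair [u [v [uv E]]]|passR u v].
  by have [w wR] := resR u v uv; rewrite E; exists w.
case/dominating_test => x /passR [w wR px] hx.
by exists w => //; apply: hx.
Qed.

Definition isolates R x p : bool :=
  passes x p.1 p.2 && [forall q in R, (q != p) ==> ~~ passes x q.1 q.2].

Lemma minimal_resolvingP R :
  minimal_resolving R <->
  resolving R /\ forall p, p \in R -> exists2 x, valid_test n m x & isolates R x p.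
Proof.
split=> -[resR minR]; split=> // p pR.
  have [x [vx missed]] :
      exists x, valid_test n m x /\ forall q, q \in R :\ p -> ~~ passes x q.1 q.2.
    apply: NNPP => hno; apply: (minR p pR); apply/resolvingP => x vx; apply: NNPP => hx.
    by apply: hno; exists x; split=> // q qRp; apply/negP => pq; apply: hx; exists q.
  have [w wR pw] := (resolvingP R).1 resR x vx.
  have wp : w = p by apply: contraTeq pw => wp; apply: missed; rewrite in_setD1 wp.
  exists x; rewrite //= /isolates -wp pw; apply/forall_inP => q qR; apply/implyP => qw.
  by apply: missed; rewrite in_setD1 -wp qw.
have [x vx /andP[_ /forall_inP iso]] := minR p pR.
case/resolvingP/(_ x vx) => w; rewrite in_setD1 => /andP[wp wR].
by apply/negP; apply: (implyP (iso w wR) wp).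
Qed.

Lemma line_has_unisolated R S :
  S \subset R -> 2 < #|S| ->
  (exists c, forall q, q \in S -> q.1 = c :> nat) \/
  (exists c, forall q, q \in S -> q.2 = c :> nat) ->
  exists2 q, q \in S & forall x, ~~ isolates R x q.
Proof.
move=> sSR cardS line; have /set0Pn[q0 q0S] : S != set0 by rewrite -card_gt0; lia.
pose key q := (q.1 : nat) + q.2.
case: (arg_minnP key q0S) => x1 x1S min1; case: (arg_maxnP key q0S) => x2 x2S max2.
have /card_gt0P[q] : 0 < #|S :\ x1 :\ x2| by do 2!apply: card_setD1_gt.
rewrite !in_setD1 => /and3P[qx2 qx1 qS]; exists q => // x.
apply/negP => /andP[pq /forall_inP iso].
have miss y : y \in S -> y != q -> ~~ passes x y.1 y.2.
  by move=> yS; apply/implyP/iso/(subsetP sSR).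
have [h1 h2 h3] : [/\ x1.1 <= q.1 <= x2.1, x1.2 <= q.2 <= x2.2
                    & x1.1 = x2.1 :> nat \/ x1.2 = x2.2 :> nat].
  have := min1 q qS; have := max2 q qS; rewrite /key.
  by case: line => -[c hc]; move: (hc _ x1S) (hc _ qS) (hc _ x2S) => /= *; split; lia.
by case/orP: (passes_between h1 h2 h3 pq); apply/negP; apply: miss; rewrite // eq_sym.
Qed.

Lemma isolated_by_diag R p : minimal_resolving R -> 3 < #|R| -> p \in R ->
  exists i j t, [/\ i < n.-1, j < m.-1 & isolates R (Diag i j t) p].
Proof.
move=> minR cardR pR; have [_ iso] := (minimal_resolvingP R).1 minR.
have cardRp : 2 < #|R :\ p| by apply: card_setD1_gt.
have straight : (exists c, forall q, q \in R :\ p -> q.1 = c :> nat) \/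
                (exists c, forall q, q \in R :\ p -> q.2 = c :> nat) -> False.
  move=> line; have [q qRp noiso] := line_has_unisolated (subD1set R p) cardRp line.
  have [y _] := iso q (subsetP (subD1set R p) q qRp).
  by rewrite (negbTE (noiso y)).
have [x vx isop] := iso p pR; have off q : q \in R :\ p -> ~~ passes x q.1 q.2.
  rewrite in_setD1 => /andP[qp qR].
  by case/andP: isop => _ /forall_inP/(_ q qR)/implyP; apply.
case: x vx isop off => [c|c|i j t] /= vx isop off.
- by case: straight; right; exists c => q /off; rewrite negbK => /eqP.
- by case: straight; left; exists c => q /off; rewrite negbK => /eqP.
by case/andP: vx => hi hj; exists i, j, t.
Qed.

Definition diag_isolated R i : {set gvert n m} :=
  [set p in R | [exists j : 'I_m, exists t, isolates R (Diag i j t) p]].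

Lemma card_diag_isolated R i : 3 < #|R| -> #|diag_isolated R i| <= 2.
Proof.
move=> cardR; rewrite leqNgt; apply/card_gt2P => -[x [y [z [[xD yD zD] [xy yz zx]]]]].
have /card_gt0P[w] : 0 < #|R :\ x :\ y :\ z| by do 3!apply: card_setD1_gt.
rewrite !in_setD1 => /and4P[wz wy wx wR].
have hit j t q : isolates R (Diag i j t) q -> cut_pass t j (q.1 <= i) q.2 by case/andP.
have miss j t p q : isolates R (Diag i j t) p -> q \in R -> q != p ->
    ~~ cut_pass t j (q.1 <= i) q.2.
  by case/andP => _ /forall_inP iso /iso/implyP.
move: xD yD zD; rewrite !inE.
move=> /andP[xR /existsP[jx /existsP[tx ix]]] /andP[yR /existsP[jy /existsP[ty iy]]].
move=> /andP[zR /existsP[jz /existsP[tz iz]]].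
have [yx zy xz] : [/\ y != x, z != y & x != z] by split; rewrite eq_sym.
exact: (no_three_cut_isolated
  (hit _ _ _ ix) (miss _ _ _ _ ix yR yx) (miss _ _ _ _ ix zR zx) (miss _ _ _ _ ix wR wx)
  (hit _ _ _ iy) (miss _ _ _ _ iy xR xy) (miss _ _ _ _ iy zR zy) (miss _ _ _ _ iy wR wy)
  (hit _ _ _ iz) (miss _ _ _ _ iz xR xz) (miss _ _ _ _ iz yR yz) (miss _ _ _ _ iz wR wz)).
Qed.

Lemma minimal_resolving_card_le R : 2 < n -> minimal_resolving R -> #|R| <= 2 * n - 2.
Proof.
move=> n_gt2 minR; case: (leqP #|R| 3) => [|cardR]; first by lia.
have cover : R \subset \bigcup_(i < n.-1) diag_isolated R i.
  apply/subsetP => p pR; have [i [j [t [hi hj isop]]]] := isolated_by_diag minR cardR pR.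
  have hj' : j < m by lia.
  apply/bigcupP; exists (Ordinal hi) => //; rewrite inE pR.
  by apply/existsP; exists (Ordinal hj'); apply/existsP; exists t.
apply: leq_trans (subset_leq_card cover) _.
apply: leq_trans (card_bigcup_le (D := diag_isolated R) (b := 2) _) _; last by lia.
by move=> i _; apply: card_diag_isolated.
Qed.

End GridTests.

Section Staircase.

Variables n m : nat.
Hypotheses (n_gt0 : 0 < n) (le_nm : n <= m).

Definition staircase_col (z : 'I_n * bool) : nat :=
  if z.2 then (if z.1.+1 < n then z.1.+1 else m) else z.1.

Definition staircase_vertex (z : 'I_n * bool) : gvert n.+1 m.+1 :=
  (inord z.1, inord (staircase_col z)).

Definition staircase : {set gvert n.+1 m.+1} := [set staircase_vertex z | z : 'I_n * bool].

Lemma staircase_vertex_row z : (staircase_vertex z).1 = z.1 :> nat.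
Proof. by rewrite /= inordK // ltnS ltnW. Qed.

Lemma staircase_vertex_col z : (staircase_vertex z).2 = staircase_col z :> nat.
Proof.
rewrite /= inordK // /staircase_col; have := ltn_ord z.1.
by case: z.2; case: (ltnP z.1.+1 n); lia.
Qed.

Lemma staircase_vertex_inj : injective staircase_vertex.
Proof.
move=> [r b] [r' b'] e.
have er := staircase_vertex_row (r, b); have ec := staircase_vertex_col (r, b).
rewrite {}e staircase_vertex_row staircase_vertex_col /staircase_col /= in er ec.
move/val_inj: er => er; subst r'; congr pair; move: ec; have := ltn_ord r.
by case: b b' => -[] /=; case: (ltnP r.+1 n); lia.
Qed.

Lemma card_staircase : #|staircase| = 2 * n.
Proof.
rewrite card_imset; last exact: staircase_vertex_inj.
by rewrite card_prod card_ord card_bool mulnC.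
Qed.

Lemma staircase_passes x : valid_test n.+1 m.+1 x ->
  exists z : 'I_n * bool, passes x z.1 (staircase_col z).
Proof.
case: x => [c|c|i j [|]] /= hx.
- by exists (Ordinal n_gt0, false); rewrite /= /staircase_col /=; lia.
- by exists (Ordinal n_gt0, false); rewrite /= /staircase_col /=; lia.
- by exists (Ordinal n_gt0, false); rewrite /= /staircase_col /cut_pass /=; lia.
have lt_in : i < n by lia.
case: (ltnP i.+1 n) => [lt_i1n|le_ni1]; last first.
  exists (Ordinal lt_in, true); rewrite /= /staircase_col /cut_pass /= ltnNge le_ni1.
  by rewrite leqnn leqNgt; case/andP: hx => _ ->.
case: (leqP j i) => le_ji.
  by exists (Ordinal lt_in, true); rewrite /= /staircase_col /cut_pass /= lt_i1n; lia.
by exists (Ordinal lt_i1n, false); rewrite /= /staircase_col /cut_pass /=; lia.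
Qed.

Lemma isolates_staircase x (y : 'I_n * bool) :
  passes x y.1 (staircase_col y) ->
  (forall z : 'I_n * bool,
     (z.1 != y.1 :> nat) || (z.2 != y.2) -> ~~ passes x z.1 (staircase_col z)) ->
  isolates staircase x (staircase_vertex y).
Proof.
move=> py others; rewrite /isolates staircase_vertex_row staircase_vertex_col py.
apply/forall_inP => q /imsetP[z _ ->]; apply/implyP => ne.
rewrite staircase_vertex_row staircase_vertex_col; apply: others.
case: z y {py} ne => [r' b'] [r b] /=.
by apply: contraNT => /norP[/negPn/eqP/val_inj-> /negPn/eqP->].
Qed.

Lemma staircase_minimal : minimal_resolving staircase.
Proof.
apply/minimal_resolvingP; try lia; split.
  apply/resolvingP; try lia; move=> x /staircase_passes[z pz].
  exists (staircase_vertex z); first exact: imset_f.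
  by rewrite staircase_vertex_row staircase_vertex_col.
move=> p /imsetP[[r b] _ ->]; have lt_rn := ltn_ord r.
have [test [vtest pr others]] : exists x, [/\ valid_test n.+1 m.+1 x,
    passes x r (staircase_col (r, b)) &
    forall z : 'I_n * bool,
      (z.1 != r :> nat) || (z.2 != b) -> ~~ passes x z.1 (staircase_col z)].
  case: b; last case: (posnP r) => [r0|r_gt0].
  - exists (Diag r r false); split; rewrite /= /staircase_col /cut_pass /=;
      [lia | by case: (ltnP r.+1 n); lia | move=> [r' b'] /=; have := ltn_ord r'].
    by case: b'; case: (ltnP r'.+1 n); case: (ltnP r.+1 n); lia.
  - exists (Diag n.-1 0 true); split; rewrite /= /staircase_col /cut_pass /=;
      [lia | lia | move=> [r' b'] /=; have := ltn_ord r'].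
    by case: b'; case: (ltnP r'.+1 n); lia.
  - exists (Diag r.-1 r false); split; rewrite /= /staircase_col /cut_pass /=;
      [lia | lia | move=> [r' b'] /=; have := ltn_ord r'].
    by case: b'; case: (ltnP r'.+1 n); lia.
by exists test => //; apply: isolates_staircase.
Qed.

End Staircase.

Theorem theorem5 (n m : nat) :
  3 <= n -> n <= m ->
  (forall R : {set gvert n m}, minimal_resolving R -> #|R| <= 2 * n - 2) /\
  (exists R : {set gvert n m}, minimal_resolving R /\ #|R| = 2 * n - 2).
Proof.
move=> n_ge3 le_nm; split=> [R minR|].
  by apply: minimal_resolving_card_le minR; lia.
case: n n_ge3 le_nm => [|n] // n_ge3; case: m => [|m] // le_nm.
exists (staircase n m); split; first by apply: staircase_minimal; lia.
by rewrite card_staircase; lia.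
Qed.
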